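(* Let $F$ be any channel with input alphabet $\{0,1\}$ and finite output alphabet. Then there exists a channel $D$ with input and output alphabet $\{0,1\}$ such that $\eta_{TV}(D)=\eta_{TV}(F)$ and $$\mathrm{BEC}(\alpha(F))\succeq_{\mathrm{deg}}F\succeq_{\mathrm{deg}}D,$$ where $\alpha(F)=1-\eta_{TV}(F)$.
   Context: $TV(P,Q)=\frac12\sum_y|P(y)-Q(y)|$. Dobrushin coefficient $\eta_{TV}(P)=\sup_{P_X\ne Q_X}\frac{TV(P\circ P_X,P\circ Q_X)}{TV(P_X,Q_X)}$, $P\circ P_X$ the output distribution. Doeblin coefficient $\alpha(P)=\sum_y\min_xP_{Y|X}(y|x)$. $\mathrm{BEC}(\varepsilon)$: binary erasure channel with input $\{0,1\}$, output $\{0,e,1\}$, input $x$ mapped to $x$ with probability $1-\varepsilon$ and to $e$ with probability $\varepsilon$. $P_{Y|X}\succeq_{\mathrm{deg}}Q_{Y'|X}$ means $Q_{Y'|X}=D_{Y'|Y}\circ P_{Y|X}$ for some channel $D_{Y'|Y}$. *)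

From HB Require Import structures.
From mathcomp Require Import all_boot all_order all_algebra.
From mathcomp Require Import boolp classical_sets reals.
Set Implicit Arguments. Unset Strict Implicit. Unset Printing Implicit Defensive.
Import Order.TTheory GRing.Theory Num.Theory.
Local Open Scope ring_scope.

Section Channels.
Variable R : realType.

Definition is_dist (T : finType) (p : T -> R) : Prop :=
  (forall t, 0 <= p t) /\ \sum_(t : T) p t = 1.

(* channel P_{Y|X}: W x y = P(Y = y | X = x) *)
Definition is_channel (X Y : finType) (W : X -> Y -> R) : Prop :=
  forall x, is_dist (W x).

Definition out_dist (X Y : finType) (W : X -> Y -> R) (p : X -> R) : Y -> R :=
  fun y => \sum_(x : X) p x * W x y.

Definition TV (T : finType) (p q : T -> R) : R :=
  2^-1 * \sum_(t : T) `|p t - q t|.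

Definition eta_TV (X Y : finType) (W : X -> Y -> R) : R :=
  sup [set r : R | exists p q : X -> R,
        [/\ is_dist p, is_dist q, p <> q &
            r = TV (out_dist W p) (out_dist W q) / TV p q]].

Definition alpha (Y : finType) (W : bool -> Y -> R) : R :=
  \sum_(y : Y) Num.min (W false y) (W true y).

(* BEC(eps): output None is the erasure symbol e *)
Definition BEC (eps : R) : bool -> option bool -> R :=
  fun x y => match y with
             | None => eps
             | Some b => if b == x then 1 - eps else 0
             end.

(* P is degraded-dominating Q: Q = D o P for some channel D *)
Definition degraded (X Y Z : finType) (P : X -> Y -> R) (Q : X -> Z -> R) : Prop :=
  exists D : Y -> Z -> R, is_channel D /\
    forall x z, Q x z = \sum_(y : Y) P x y * D y z.

End Channels.

(* For a binary-input channel the Dobrushin coefficient is the total variation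
   between the two rows, and since [min a b = (a + b - |a - b|) / 2] the Doeblin
   coefficient is one minus it.  Each row splits as [alpha] times the common
   part [min (F 0) (F 1)] (normalised) plus [1 - alpha] times a residual, which
   is exactly BEC(alpha) followed by a channel.  Quantising the output to the
   sign of [F 1 y - F 0 y] keeps all the total variation, so the resulting
   binary channel D has the same Dobrushin coefficient. *)

From HB Require Import structures.
From mathcomp Require Import all_boot all_order all_algebra.
From mathcomp Require Import boolp classical_sets reals.
From mathcomp Require Import ring lra.
Set Implicit Arguments. Unset Strict Implicit. Unset Printing Implicit Defensive.
Import Order.TTheory GRing.Theory Num.Theory.
Local Open Scope classical_set_scope.
Local Open Scope ring_scope.

Lemma big_option (R : nmodType) (T : finType) (f : option T -> R) :
  \sum_(o : option T) f o = f None + \sum_(t : T) f (Some t).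
Proof.
rewrite (perm_big (None :: map Some (enum T))) /= ?big_cons ?big_map ?big_enum //.
apply: uniq_perm; first exact: index_enum_uniq.
  rewrite /= map_inj_uniq ?enum_uniq ?andbT //; last exact: Some_inj.
  by apply/mapP => -[].
by case=> [t|]; rewrite mem_index_enum /= ?inE // map_f ?mem_enum.
Qed.

Section Channels.
Variable R : realType.

Section Distributions.
Variable T : finType.
Implicit Types p q : T -> R.

Lemma TV_ltE p q : is_dist p -> is_dist q ->
  TV p q = \sum_(t | p t < q t) (q t - p t).
Proof.
move=> [_ p1] [_ q1].
have normE t : `|p t - q t| = (p t - q t) + 2 * (if p t < q t then q t - p t else 0).
  by case: ltrP => _; lra.
rewrite /TV (eq_bigr _ (fun t _ => normE t)) big_split /= sumrB p1 q1 subrr.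
rewrite -mulr_sumr -big_mkcond /=; lra.
Qed.

(* [q] is only a fallback, making the result a distribution when [p] has mass zero. *)
Definition normalize p q : T -> R :=
  if \sum_t p t == 0 then q else fun t => p t / \sum_t p t.

Lemma normalize_dist p q : (forall t, 0 <= p t) -> is_dist q -> is_dist (normalize p q).
Proof.
move=> p_ge0 q_dist; rewrite /normalize; case: eqP => // /eqP sum_neq0.
split; first by move=> t; rewrite divr_ge0 // sumr_ge0.
by rewrite -mulr_suml mulfV.
Qed.

Lemma mul_normalize p q t : (forall t, 0 <= p t) ->
  (\sum_t p t) * normalize p q t = p t.
Proof.
move=> p_ge0; rewrite /normalize; case: eqP => [sum0|/eqP sum_neq0].
  by rewrite sum0 mul0r (psumr_eq0P (P := predT) _ sum0).
by rewrite mulrC divfK.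
Qed.

End Distributions.

Lemma is_channel_degraded (X Y Z : finType) (P : X -> Y -> R) (Q : X -> Z -> R) :
  is_channel P -> degraded P Q -> is_channel Q.
Proof.
move=> P_ch [D [D_ch QE]] x; split.
  move=> z; rewrite QE; apply: sumr_ge0 => y _.
  by apply: mulr_ge0; [case: (P_ch x) | case: (D_ch y)].
under eq_bigr do rewrite QE.
rewrite exchange_big /= -(proj2 (P_ch x)); apply: eq_bigr => y _.
by rewrite -mulr_sumr (proj2 (D_ch y)) mulr1.
Qed.

Definition push_channel (X Y Z : finType) (W : X -> Y -> R) (f : Y -> Z) : X -> Z -> R :=
  fun x z => \sum_(y | f y == z) W x y.

Lemma degraded_push (X Y Z : finType) (W : X -> Y -> R) (f : Y -> Z) :
  degraded W (push_channel W f).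
Proof.
exists (fun y z => (f y == z)%:R); split.
  move=> y; split=> [z|]; first exact: ler0n.
  by rewrite (bigD1 (f y)) //= eqxx big1 ?addr0 // => z /negPf; rewrite eq_sym => ->.
move=> x z; rewrite /push_channel big_mkcond /=; apply: eq_bigr => y _.
by case: eqP; rewrite ?mulr1 ?mulr0.
Qed.

Section BinaryInput.
Variable Y : finType.
Implicit Types (W : bool -> Y -> R) (p q : bool -> R).

Lemma TV_bool p q : p true + p false = 1 -> q true + q false = 1 ->
  TV p q = `|p true - q true|.
Proof.
move=> p1 q1; rewrite /TV big_bool /=.
have -> : p false - q false = - (p true - q true) by lra.
rewrite normrN; lra.
Qed.

Lemma TV_out_dist W p q : p true + p false = 1 -> q true + q false = 1 ->
  TV (out_dist W p) (out_dist W q) = `|p true - q true| * TV (W false) (W true).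
Proof.
move=> p1 q1; rewrite /TV mulrCA [in RHS]mulr_sumr; congr (_ * _).
apply: eq_bigr => y _; rewrite distrC -normrM /out_dist !big_bool /=; congr `|_|.
have -> : p false = 1 - p true by lra.
have -> : q false = 1 - q true by lra.
ring.
Qed.

Lemma eta_TV_bool W : eta_TV W = TV (W false) (W true).
Proof.
rewrite /eta_TV [X in sup X](_ : _ = [set TV (W false) (W true)]) ?sup1 //.
apply/seteqP; split=> r /=.
  move=> [p [q [[_] + [_] + neq_pq ->]]]; rewrite !big_bool /= => p1 q1.
  have neq_true : p true != q true.
    apply: contra_notN neq_pq => /eqP eq_true; apply/funext => -[] //.
    by apply: (addrI (p true)); rewrite p1 eq_true q1.
  rewrite TV_out_dist // (TV_bool p1 q1) mulrAC divff ?mul1r //.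
  by rewrite normr_eq0 subr_eq0.
move=> ->; exists (fun x => (~~ x)%:R), (fun x => x%:R).
split.
- by split; [case=> /=; rewrite ?ler01 ?lexx | rewrite big_bool /= add0r].
- by split; [case=> /=; rewrite ?ler01 ?lexx | rewrite big_bool /= addr0].
- by move/(congr1 (fun f => f true)) => /eqP; rewrite /= eq_sym oner_eq0.
- rewrite TV_out_dist /= ?add0r ?addr0 // TV_bool /= ?add0r ?addr0 //.
  by rewrite normrN1 mul1r divr1.
Qed.

Lemma alpha_TV W : is_channel W -> alpha W = 1 - TV (W false) (W true).
Proof.
move=> W_ch; rewrite /alpha /TV.
under eq_bigr do rewrite minr_absE.
rewrite -mulr_suml sumrB big_split /= (proj2 (W_ch false)) (proj2 (W_ch true)).
lra.
Qed.

Lemma TV_push_lt W : is_channel W ->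
  let s y := W false y < W true y in
  TV (push_channel W s false) (push_channel W s true) = TV (W false) (W true).
Proof.
move=> W_ch s.
have push_ch := is_channel_degraded W_ch (degraded_push W s).
have push_sum1 x : push_channel W s x true + push_channel W s x false = 1.
  by rewrite -(proj2 (push_ch x)) big_bool.
rewrite TV_bool // (TV_ltE (W_ch false) (W_ch true)) distrC /push_channel -sumrB.
under eq_bigl do rewrite eqb_id.
by rewrite ger0_norm // sumr_ge0 // => y /ltW; rewrite subr_ge0.
Qed.

Lemma degraded_BEC_alpha W : is_channel W -> degraded (BEC (alpha W)) W.
Proof.
move=> W_ch; set a := alpha W.
pose m y := Num.min (W false y) (W true y).
have m_ge0 y : 0 <= m y by rewrite le_min (proj1 (W_ch false)) (proj1 (W_ch true)).
have m_le x y : m y <= W x y by case: x; rewrite ge_min lexx ?orbT.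
pose r x y := W x y - m y.
have r_ge0 x y : 0 <= r x y by rewrite subr_ge0.
have sum_r x : \sum_y r x y = 1 - a by rewrite sumrB (proj2 (W_ch x)).
exists (fun o => if o is Some x then normalize (r x) (W x) else normalize m (W false)).
split; first by case=> [x|]; apply: normalize_dist.
move=> x y; rewrite big_option (bigD1 x) //= eqxx big1 => [|b /negPf ->]; last first.
  by rewrite mul0r.
by rewrite addr0 (mul_normalize _ _ m_ge0) -(sum_r x) (mul_normalize _ _ (r_ge0 x)) addrC subrK.
Qed.

End BinaryInput.
End Channels.

Theorem mainTheorem8 (R : realType) (Y : finType) (F : bool -> Y -> R) :
  is_channel F ->
  exists D : bool -> bool -> R,
    [/\ is_channel D,
        eta_TV D = eta_TV F,
        degraded (BEC (alpha F)) F,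
        degraded F D &
        alpha F = 1 - eta_TV F].
Proof.
move=> F_ch; pose s y := F false y < F true y.
exists (push_channel F s); split.
- exact: is_channel_degraded F_ch (degraded_push F s).
- by rewrite !eta_TV_bool TV_push_lt.
- exact: degraded_BEC_alpha.
- exact: degraded_push.
- by rewrite alpha_TV // eta_TV_bool.
Qed.
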